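(* Let $n\ge2$ and $i,j\in\{0,\dots,n-1\}$. If $w\in W(\mathrm{C}_n)$ satisfies $w\beta_i=\beta_j$, then $we_iw^{-1}=e_j$ in $\mathrm{Br}(\mathrm{C}_n)$.
   Context: Let $R$ be a commutative ring with an invertible element $\delta$, and $n\ge1$. The Brauer algebra of type $\mathrm{C}_n$, $\mathrm{Br}(\mathrm{C}_n,R,\delta)$, is the unital associative $R$-algebra generated by $r_0,\dots,r_{n-1},e_0,\dots,e_{n-1}$ subject to the following relations, where for distinct $i,j\in\{0,\dots,n-1\}$ we write $i\sim j$ if $|i-j|=1$ and $i\nsim j$ otherwise: $r_i^2=1$ and $r_ie_i=e_ir_i=e_i$ for all $i$; $e_i^2=\delta^2e_i$ for $i>0$; $e_0^2=\delta e_0$; $r_ir_j=r_jr_i$, $e_ir_j=r_je_i$, $e_ie_j=e_je_i$ for $i\nsim j$; $r_ir_jr_i=r_jr_ir_j$, $r_jr_ie_j=e_ie_j$, $r_ie_jr_i=r_je_ir_j$ for $i\sim j$ with $i,j>0$; and $r_1r_0r_1r_0=r_0r_1r_0r_1$, $r_1r_0e_1=r_0e_1$, $r_1e_0r_1e_0=e_0e_1e_0$, $r_1r_0r_1e_0=e_0r_1r_0r_1$, $e_1r_0e_1=\delta e_1$, $e_1e_0e_1=\delta e_1$, $e_1r_0r_1=e_1r_0$, $e_1e_0r_1=e_1e_0$. Write $\mathrm{Br}(\mathrm{C}_n)=\mathrm{Br}(\mathrm{C}_n,\mathbb{Z}[\delta^{\pm1}],\delta)$. $W(\mathrm{C}_n)$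 is the subgroup of the multiplicative monoid of $\mathrm{Br}(\mathrm{C}_n)$ generated by $r_0,\dots,r_{n-1}$; it is isomorphic to the Weyl group of type $\mathrm{C}_n$ via $r_i\mapsto s_{\beta_i}$, where, with $f_1,\dots,f_n$ the standard basis of $\mathbb{R}^n$, $\beta_0=2f_1$ (long simple root) and $\beta_i=f_{i+1}-f_i$ for $1\le i\le n-1$ (short simple roots), and $s_\beta(x)=x-\frac{2(x,\beta)}{(\beta,\beta)}\beta$. Through this isomorphism $W(\mathrm{C}_n)$ acts on $\mathbb{R}^n$. *)

From HB Require Import structures.
From mathcomp Require Import all_boot all_order all_algebra.
Set Implicit Arguments. Unset Strict Implicit. Unset Printing Implicit Defensive.
Import Order.TTheory GRing.Theory Num.Theory.
Local Open Scope ring_scope.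

(* Indices 0..n-1 are natural numbers i < n.  Generators r_i, e_i of
   Br(C_n) are given as functions nat -> A (only values at i < n matter). *)

Definition adj (i j : nat) : bool := (i == j.+1) || (j == i.+1).

Record BrC_rels (A : pzRingType) (n : nat) (d : A) (r e : nat -> A) : Prop := {
  d_unit : exists d' : A, d * d' = 1 /\ d' * d = 1;
  d_central : forall x : A, d * x = x * d;
  rel_rr : forall i, (i < n)%N -> r i * r i = 1;
  rel_re : forall i, (i < n)%N -> r i * e i = e i;
  rel_er : forall i, (i < n)%N -> e i * r i = e i;
  rel_ee : forall i, (0 < i < n)%N -> e i * e i = d ^+ 2 * e i;
  rel_ee0 : e 0%N * e 0%N = d * e 0%N;
  rel_comm_rr : forall i j, (i < n)%N -> (j < n)%N -> i != j -> ~~ adj i j ->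
     r i * r j = r j * r i;
  rel_comm_er : forall i j, (i < n)%N -> (j < n)%N -> i != j -> ~~ adj i j ->
     e i * r j = r j * e i;
  rel_comm_ee : forall i j, (i < n)%N -> (j < n)%N -> i != j -> ~~ adj i j ->
     e i * e j = e j * e i;
  rel_braid : forall i j, (0 < i < n)%N -> (0 < j < n)%N -> adj i j ->
     r i * r j * r i = r j * r i * r j;
  rel_rre : forall i j, (0 < i < n)%N -> (0 < j < n)%N -> adj i j ->
     r j * r i * e j = e i * e j;
  rel_rer : forall i j, (0 < i < n)%N -> (0 < j < n)%N -> adj i j ->
     r i * e j * r i = r j * e i * r j;
  rel_C1 : r 1%N * r 0%N * r 1%N * r 0%N = r 0%N * r 1%N * r 0%N * r 1%N;
  rel_C2 : r 1%N * r 0%N * e 1%N = r 0%N * e 1%N;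
  rel_C3 : r 1%N * e 0%N * r 1%N * e 0%N = e 0%N * e 1%N * e 0%N;
  rel_C4 : r 1%N * r 0%N * r 1%N * e 0%N = e 0%N * r 1%N * r 0%N * r 1%N;
  rel_C5 : e 1%N * r 0%N * e 1%N = d * e 1%N;
  rel_C6 : e 1%N * e 0%N * e 1%N = d * e 1%N;
  rel_C7 : e 1%N * r 0%N * r 1%N = e 1%N * r 0%N;
  rel_C8 : e 1%N * e 0%N * r 1%N = e 1%N * e 0%N
}.

Definition rword (A : pzRingType) (r : nat -> A) (w : seq nat) : A :=
  \prod_(a <- w) r a.

(* Root system of type C_n in R^n (we use rational coordinates, which suffice:
   all roots and reflections are rational).  Coordinate k (0-based) is f_{k+1}. *)
Definition dotv (n : nat) (x y : 'rV[rat]_n) : rat := \sum_(k < n) x 0 k * y 0 k.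

Definition beta (n : nat) (i : nat) : 'rV[rat]_n :=
  \row_(k < n) (if i == 0%N then (if (k : nat) == 0%N then 2 else 0)
                else ((k : nat) == i)%:R - ((k : nat) == i.-1)%:R).

Definition refl (n : nat) (b x : 'rV[rat]_n) : 'rV[rat]_n :=
  x - (2 * dotv x b / dotv b b) *: b.

Definition wact (n : nat) (w : seq nat) (x : 'rV[rat]_n) : 'rV[rat]_n :=
  foldr (fun a y => refl (beta n a) y) x w.

From HB Require Import structures.
From mathcomp Require Import all_boot all_order all_algebra.
From mathcomp Require Import zify ring lra.
Import GRing.Theory.
Set Implicit Arguments. Unset Strict Implicit.
Local Open Scope ring_scope.

(* Up to sign, the roots of C_n are 2 f_k, f_b - f_a and f_a + f_b, and W(C_n)
   permutes these lines; on their labels the simple reflection s_c acts by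
   [croot_refl c].  To each label x we attach an element [e_root x] of the
   algebra, equal to e_j on the line of beta_j and obtained from e_0 or e_b by
   conjugating with explicit words in the r_c.  The heart of the proof is the
   identity r_c e_x r_c = e_(s_c x), checked case by case from the defining
   relations.  Iterating along w gives w e_i w^-1 = e_(w beta_i); as w beta_i is
   +-beta_j and only the label of beta_j has a vector proportional to beta_j,
   this is e_j. *)

Definition transp_pred (c k : nat) : nat :=
  if k == c then c.-1 else if k == c.-1 then c else k.

Lemma transp_predK c : involutive (transp_pred c).
Proof.
move=> k; rewrite /transp_pred.
case: (k =P c) => [->|kc]; [|case: (k =P c.-1) => [->|kc']] => /=;
  repeat (case: eqP => ? /=); lia.
Qed.

Lemma eq_transp_pred c m k : (transp_pred c m == k) = (m == transp_pred c k).
Proof. by rewrite -{1}(transp_predK c k) (can_eq (transp_predK c)). Qed.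

Lemma transp_pred_self c : transp_pred c c = c.-1.
Proof. by rewrite /transp_pred eqxx. Qed.

Lemma transp_pred_pred c : transp_pred c c.-1 = c.
Proof. by rewrite /transp_pred eqxx; case: (c.-1 =P c). Qed.

Lemma transp_pred_id c k : k != c -> k != c.-1 -> transp_pred c k = k.
Proof. by move=> /negbTE kc /negbTE kc'; rewrite /transp_pred kc kc'. Qed.

(* A root of C_n up to sign, in 0-based coordinates: [Long k] is 2 f_(k+1) and,
   for a < b, [Diff a b] is f_(b+1) - f_(a+1) and [Sum a b] is f_(a+1) + f_(b+1). *)
Inductive croot := Long of nat | Diff of nat & nat | Sum of nat & nat.

Definition croot_in (n : nat) (x : croot) : bool :=
  match x with
  | Long k => (k < n)%N
  | Diff a b | Sum a b => (a < b < n)%N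
  end.

Definition croot_refl (c : nat) (x : croot) : croot :=
  if c == 0%N then
    match x with
    | Long k => Long k
    | Diff a b => if a == 0%N then Sum a b else Diff a b
    | Sum a b => if a == 0%N then Diff a b else Sum a b
    end
  else
    match x with
    | Long k => Long (transp_pred c k)
    | Diff a b => if (a == c.-1) && (b == c) then Diff a b
                  else Diff (transp_pred c a) (transp_pred c b)
    | Sum a b => if (a == c.-1) && (b == c) then Sum a b
                 else Sum (transp_pred c a) (transp_pred c b)
    end.

Lemma croot_in_refl n c x : (c < n)%N -> croot_in n x -> croot_in n (croot_refl c x).
Proof.
move=> hc; rewrite /croot_refl /transp_pred; case: x => [k|a b|a b] /= hx;
  repeat (case: eqP => ? /=); lia.
Qed.

Lemma croot_in_refl_word n w x : all (fun a => a < n)%N w -> croot_in n x ->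
  croot_in n (foldr croot_refl x w).
Proof.
elim: w => [|c w IH] //= /andP[hc hw] hx.
by apply: croot_in_refl => //; apply: IH.
Qed.

Definition simple_croot (j : nat) : croot := if j == 0%N then Long 0 else Diff j.-1 j.

Lemma croot_in_simple n j : (j < n)%N -> croot_in n (simple_croot j).
Proof. by rewrite /simple_croot; case: eqP => /= ?; lia. Qed.

Section ConjugationByGenerators.
Variables (A : pzRingType) (n : nat) (d : A) (r e : nat -> A).
Hypothesis H : BrC_rels n d r e.
Hypothesis n_ge2 : (2 <= n)%N.

Lemma r_invol c : (c < n)%N -> r c * r c = 1.
Proof. by move=> hc; apply: (rel_rr H). Qed.

Lemma r_far_comm c c' : (c < n)%N -> (c' < n)%N -> ((c'.+2 <= c) || (c.+2 <= c'))%N ->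
  r c * r c' = r c' * r c.
Proof.
move=> hc hc' far; apply: (rel_comm_rr H) => //; first by apply/eqP; lia.
by rewrite /adj; apply/negP; lia.
Qed.

Lemma re_far_comm c c' : (c < n)%N -> (c' < n)%N -> ((c'.+2 <= c) || (c.+2 <= c'))%N ->
  r c * e c' = e c' * r c.
Proof.
move=> hc hc' far; symmetry; apply: (rel_comm_er H) => //; first by apply/eqP; lia.
by rewrite /adj; apply/negP; lia.
Qed.

Lemma r_braid c : (0 < c)%N -> (c.+1 < n)%N -> r c * r c.+1 * r c = r c.+1 * r c * r c.+1.
Proof.
move=> c_gt0 hc; apply: (rel_braid H); try (apply/andP; split; lia).
by rewrite /adj eqxx orbT.
Qed.

Lemma conj_r_fixed c x : (c < n)%N -> r c * x = x * r c -> r c * x * r c = x.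
Proof. by move=> hc ->; rewrite -mulrA r_invol // mulr1. Qed.

Lemma conj_r_sym c x y : (c < n)%N -> r c * x * r c = y -> r c * y * r c = x.
Proof. by move=> hc <-; rewrite !mulrA r_invol // mul1r -mulrA r_invol // mulr1. Qed.

Lemma conj_rM3 c x y z : (c < n)%N ->
  r c * (x * y * z) * r c = (r c * x * r c) * (r c * y * r c) * (r c * z * r c).
Proof.
move=> hc; rewrite !mulrA -(mulrA _ (r c) (r c)) r_invol // mulr1.
by rewrite -(mulrA _ (r c) (r c)) r_invol // mulr1.
Qed.

Fixpoint rdown k := if k is k'.+1 then r k'.+1 * rdown k' else 1.
Fixpoint rup k := if k is k'.+1 then rup k' * r k'.+1 else 1.

(* Moves an element attached to the coordinate f_1 (such as e_0 for 2 f_1) to f_(k+1). *)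
Definition transport (X : A) k := rdown k * X * rup k.

Lemma transport_succ X k : transport X k.+1 = r k.+1 * transport X k * r k.+1.
Proof. by rewrite /transport /= !mulrA. Qed.

Lemma r_rdown_comm c k : (c < n)%N -> (k.+2 <= c)%N -> r c * rdown k = rdown k * r c.
Proof.
move=> hc; elim: k => [|k IH] hk /=; first by rewrite mul1r mulr1.
by rewrite mulrA r_far_comm; try lia; rewrite -mulrA IH ?mulrA //; lia.
Qed.

Lemma rup_r_comm c k : (c < n)%N -> (k.+2 <= c)%N -> rup k * r c = r c * rup k.
Proof.
move=> hc; elim: k => [|k IH] hk /=; first by rewrite mul1r mulr1.
by rewrite -mulrA -r_far_comm; try lia; rewrite mulrA IH ?mulrA //; lia.
Qed.

Lemma r_rdown_shift c k : (0 < c < k)%N -> (k < n)%N -> r c * rdown k = rdown k * r c.+1.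
Proof.
move=> /andP[c_gt0]; elim: k => [|k IH] // ck hk /=.
case: (ltngtP c k) => hck; [|lia|].
  by rewrite mulrA r_far_comm; try lia; rewrite -mulrA IH ?mulrA //; lia.
subst c; case: k c_gt0 ck hk IH => [|k] // _ _ hk _ /=.
rewrite !mulrA r_braid //; try lia.
by rewrite -!mulrA; congr (_ * (_ * _)); rewrite r_rdown_comm //; lia.
Qed.

Lemma rup_r_shift c k : (0 < c < k)%N -> (k < n)%N -> rup k * r c = r c.+1 * rup k.
Proof.
move=> /andP[c_gt0]; elim: k => [|k IH] // ck hk /=.
case: (ltngtP c k) => hck; [|lia|].
  by rewrite -mulrA -r_far_comm; try lia; rewrite mulrA IH -?mulrA //; lia.
subst c; case: k c_gt0 ck hk IH => [|k] // _ _ hk _ /=.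
rewrite -!mulrA (mulrA (r k.+1)) r_braid; try lia.
by rewrite !mulrA rup_r_comm //; lia.
Qed.

Section Transport.
Variable X : A.
Hypothesis X_comm : forall c, (2 <= c < n)%N -> r c * X = X * r c.

Lemma conj_r_transport c k : (0 < c < n)%N -> (k < n)%N ->
  r c * transport X k * r c = transport X (transp_pred c k).
Proof.
move=> /andP[c_gt0 hc] hk; rewrite /transp_pred.
case: eqP => [->|/eqP kc].
  case: c c_gt0 hc => // c _ hc /=; rewrite transport_succ.
  by rewrite !mulrA r_invol // mul1r -mulrA r_invol // mulr1.
case: eqP => [->|/eqP kc'].
  by case: c c_gt0 hc kc => // c _ hc _ /=; rewrite transport_succ.
rewrite /transport; case: (ltnP k c) => hkc.
  apply: conj_r_fixed => //; rewrite !mulrA r_rdown_comm //; try lia.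
  rewrite -(mulrA (rdown k)) X_comm; last lia.
  by rewrite -!mulrA rup_r_comm //; lia.
rewrite !mulrA r_rdown_shift //; try lia.
rewrite -(mulrA (rdown k)) X_comm; last lia.
rewrite -!mulrA rup_r_shift //; try lia.
by rewrite (mulrA (r c.+1)) r_invol ?mul1r ?mulrA //; lia.
Qed.

Hypothesis r0_conj_X : r 0 * X * r 0 = X.
Hypothesis r0_conj_r1X : r 0 * (r 1 * X * r 1) * r 0 = r 1 * X * r 1.

Lemma conj_r0_transport k : (k < n)%N -> r 0 * transport X k * r 0 = transport X k.
Proof.
elim: k => [|k IH] hk; first by rewrite /transport /= mul1r mulr1.
case: k IH hk => [|k] IH hk; first by rewrite transport_succ /transport /= !mul1r !mulr1.
rewrite (transport_succ X k.+1); move: IH; set T := transport X k.+1 => IH; clearbody T.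
have r0_rk_comm : r 0 * r k.+2 = r k.+2 * r 0 by apply: r_far_comm; lia.
rewrite !mulrA r0_rk_comm -!mulrA -r0_rk_comm; congr (_ * _).
by rewrite !mulrA IH //; lia.
Qed.

End Transport.

Lemma e0_comm c : (2 <= c < n)%N -> r c * e 0 = e 0 * r c.
Proof. by move=> hc; apply: re_far_comm; lia. Qed.

Lemma r0_comm c : (2 <= c < n)%N -> r c * r 0 = r 0 * r c.
Proof. by move=> hc; apply: r_far_comm; lia. Qed.

Lemma r0_conj_e0 : r 0 * e 0 * r 0 = e 0.
Proof. by rewrite (rel_re H) ?(rel_er H) //; lia. Qed.

Lemma r0_conj_r1e0 : r 0 * (r 1 * e 0 * r 1) * r 0 = r 1 * e 0 * r 1.
Proof.
have r01e0 : r 0 * r 1 * e 0 = r 1 * e 0 * r 1 * r 0 * r 1.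
  transitivity (r 1 * (r 1 * r 0 * r 1 * e 0)); first by rewrite !mulrA r_invol ?mul1r //; lia.
  by rewrite (rel_C4 H) !mulrA.
rewrite !mulrA r01e0 -(mulrA _ (r 1) (r 1)) r_invol ?mulr1; last lia.
by rewrite -(mulrA _ (r 0) (r 0)) r_invol ?mulr1 //; lia.
Qed.

Lemma r0_conj_r0 : r 0 * r 0 * r 0 = r 0.
Proof. by rewrite r_invol ?mul1r //; lia. Qed.

Lemma r0_conj_r1r0 : r 0 * (r 1 * r 0 * r 1) * r 0 = r 1 * r 0 * r 1.
Proof. by rewrite !mulrA -(rel_C1 H) -(mulrA _ (r 0) (r 0)) r_invol ?mulr1 //; lia. Qed.

(* [e_diff b m] is the element attached to the root f_(b+1) - f_(b-m). *)
Fixpoint e_diff b m := if m is m'.+1 then r (b - m) * e_diff b m' * r (b - m) else e b.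

Lemma e_diff_succ b m : e_diff b m.+1 = r (b - m.+1) * e_diff b m * r (b - m.+1).
Proof. by []. Qed.

Lemma r_e_diff_comm c b m : (c < n)%N -> (b < n)%N -> (m < b)%N ->
  ((b.+2 <= c) || (c.+2 <= b - m))%N -> r c * e_diff b m = e_diff b m * r c.
Proof.
move=> hc hb; elim: m => [|m IH] hm far /=; first by apply: re_far_comm; lia.
rewrite !mulrA r_far_comm; try lia. rewrite -!mulrA -r_far_comm; try lia.
by congr (_ * _); rewrite mulrA IH ?mulrA //; lia.
Qed.

Lemma conj_r_e_diff_inner c b m : (b < n)%N -> (m < b)%N -> (b - m < c < b)%N ->
  r c * e_diff b m * r c = e_diff b m.
Proof.
move=> hb; elim: m c => [|m IH] c hm hc /=; first lia.
have [hc'|hc'] := boolP (b - m < c)%N.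
  have rc_comm : r c * r (b - m.+1) = r (b - m.+1) * r c by apply: r_far_comm; lia.
  rewrite !mulrA rc_comm -!mulrA -rc_comm (mulrA (r c)) (mulrA _ (r c)) IH //; lia.
case: m IH hm hc hc' => [|m] IH hm hc hc' /=; first lia.
set x := (b - m.+2)%N; have -> : (b - m.+1 = x.+1)%N by rewrite /x; lia.
have -> : c = x.+1 by rewrite /x; lia.
have : r x * e_diff b m * r x = e_diff b m.
  by apply: conj_r_fixed; [lia | apply: r_e_diff_comm; lia].
move: (e_diff b m) => E conjE.
transitivity ((r x.+1 * r x * r x.+1) * E * (r x.+1 * r x * r x.+1)); first by rewrite !mulrA.
rewrite -r_braid; try lia.
transitivity (r x * r x.+1 * (r x * E * r x) * r x.+1 * r x); first by rewrite !mulrA.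
by rewrite conjE !mulrA.
Qed.

Lemma conj_r_e_diff_up b m : (0 < b)%N -> (b.+1 < n)%N -> (m < b)%N ->
  r b.+1 * e_diff b m * r b.+1 = e_diff b.+1 m.+1.
Proof.
move=> b_gt0 hb; elim: m => [|m IH] hm.
  rewrite /= subSS subn0 (rel_rer H) //; try (apply/andP; lia).
  by rewrite /adj eqxx.
rewrite e_diff_succ (e_diff_succ b.+1) subSS -IH; last lia.
have rb_comm : r b.+1 * r (b - m.+1) = r (b - m.+1) * r b.+1 by apply: r_far_comm; lia.
by rewrite !mulrA rb_comm -!mulrA -rb_comm !mulrA.
Qed.

(* [transport (r 0) a] is the reflection in 2 f_(a+1); conjugating by it turns
   f_(b+1) - f_(a+1) into f_(b+1) + f_(a+1). *)
Definition e_root (x : croot) : A :=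
  match x with
  | Long k => transport (e 0) k
  | Diff a b => e_diff b (b - a.+1)
  | Sum a b => transport (r 0) a * e_diff b (b - a.+1) * transport (r 0) a
  end.

Lemma conj_r0_e_root x : croot_in n x -> r 0 * e_root x * r 0 = e_root (croot_refl 0 x).
Proof.
have n_gt0 : (0 < n)%N by lia.
rewrite /croot_refl eqxx; case: x => [k|a b|a b] /= hx.
- by apply: conj_r0_transport => //; [exact: r0_conj_e0 | exact: r0_conj_r1e0].
- case: (a =P 0%N) => [a0|/eqP a0]; first by subst a; rewrite /= /transport /= !mul1r !mulr1.
  by apply: conj_r_fixed => //; apply: r_e_diff_comm; lia.
- case: (a =P 0%N) => [a0|/eqP a0].
    by subst a; apply: conj_r_sym => //; rewrite /transport /= !mul1r !mulr1.
  rewrite conj_rM3 // conj_r0_transport //;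
    [|exact: r0_conj_r0|exact: r0_conj_r1r0|lia].
  by rewrite (@conj_r_fixed _ (e_diff b _)) //; apply: r_e_diff_comm; lia.
Qed.

Lemma conj_r_e_diff c a b : (0 < c < n)%N -> (a < b < n)%N -> ~~ ((a == c.-1) && (b == c)) ->
  r c * e_root (Diff a b) * r c = e_root (Diff (transp_pred c a) (transp_pred c b)).
Proof.
move=> /andP[c_gt0 hc] /andP[ab hb] not_adj /=.
have [ac|ca] := eqVneq a c.
  subst c; rewrite transp_pred_self transp_pred_id; try lia.
  have -> : (b - a.-1.+1 = (b - a.+1).+1)%N by lia.
  by rewrite e_diff_succ; have -> : (b - (b - a.+1).+1 = a)%N by lia.
have [ca1|ca1] := eqVneq c a.+1.
  subst c; move: not_adj; rewrite /= eqxx /= => ba1.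
  rewrite -[in transp_pred _ a]/(a.+1.-1) transp_pred_pred transp_pred_id; try lia.
  have -> : (b - a.+1 = (b - a.+2).+1)%N by lia.
  apply: conj_r_sym => //; rewrite e_diff_succ.
  by have -> : (b - (b - a.+2).+1 = a.+1)%N by lia.
have [cb1|cb1] := eqVneq c b.+1.
  subst c; rewrite -[in transp_pred _ b]/(b.+1.-1) transp_pred_pred transp_pred_id; try lia.
  have -> : (b.+1 - a.+1 = (b - a.+1).+1)%N by lia.
  by rewrite conj_r_e_diff_up //; lia.
have [cb|cb] := eqVneq c b.
  subst c; move: not_adj; rewrite eqxx andbT => ab'.
  rewrite transp_pred_self transp_pred_id; try lia.
  have [b' eb] : exists b', b = b'.+1 by exists b.-1; lia.
  subst b; have -> : (b'.+1 - a.+1 = (b' - a.+1).+1)%N by lia.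
  by apply: conj_r_sym => //; rewrite conj_r_e_diff_up //; lia.
rewrite !transp_pred_id; try lia.
have [far|near] := boolP ((b.+2 <= c) || (c.+2 <= a.+1))%N.
  by apply: conj_r_fixed => //; apply: r_e_diff_comm; lia.
by apply: conj_r_e_diff_inner; lia.
Qed.

Lemma conj_r_e_sum_adjacent b : (b.+1 < n)%N ->
  r b.+1 * e_root (Sum b b.+1) * r b.+1 = e_root (Sum b b.+1).
Proof.
rewrite /= subnn /=; elim: b => [|b IH] hb.
  rewrite /transport /= !mul1r !mulr1 !mulrA (rel_C2 H) -!mulrA.
  by rewrite (mulrA (e 1)) (rel_C7 H).
have rb2_conj_T : r b.+2 * transport (r 0) b * r b.+2 = transport (r 0) b.
  rewrite conj_r_transport; [|exact: r0_comm|lia|lia].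
  by rewrite transp_pred_id //; lia.
have rb2_comm_T : r b.+2 * transport (r 0) b = transport (r 0) b * r b.+2.
  by rewrite -{1}rb2_conj_T !mulrA r_invol ?mul1r //; lia.
have rer : r b.+1 * e b.+2 * r b.+1 = r b.+2 * e b.+1 * r b.+2.
  by apply: (rel_rer H); try (apply/andP; lia); rewrite /adj eqxx orbT.
move: IH rb2_comm_T; rewrite transport_succ; set T := transport (r 0) b => IH T_comm.
clearbody T; have {}IH := IH ltac:(lia).
have -> : r b.+1 * T * r b.+1 * e b.+2 * (r b.+1 * T * r b.+1) =
    r b.+1 * r b.+2 * (T * e b.+1 * T) * r b.+2 * r b.+1.
  transitivity (r b.+1 * T * (r b.+1 * e b.+2 * r b.+1) * T * r b.+1); first by rewrite !mulrA.
  rewrite rer; transitivity (r b.+1 * (T * r b.+2) * e b.+1 * (r b.+2 * T) * r b.+1);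
    first by rewrite !mulrA.
  by rewrite -T_comm {2}T_comm !mulrA.
move: IH; set Y := T * e b.+1 * T => IH; clearbody Y.
transitivity ((r b.+2 * r b.+1 * r b.+2) * Y * (r b.+2 * r b.+1 * r b.+2)); first by rewrite !mulrA.
rewrite -r_braid; try lia.
transitivity (r b.+1 * r b.+2 * (r b.+1 * Y * r b.+1) * r b.+2 * r b.+1); first by rewrite !mulrA.
by rewrite IH.
Qed.

Lemma conj_rpos_e_root c x : (0 < c < n)%N -> croot_in n x ->
  r c * e_root x * r c = e_root (croot_refl c x).
Proof.
move=> /andP[c_gt0 hc]; rewrite /croot_refl ifN_eq; last lia.
case: x => [k|a b|a b] /= hx.
- by apply: conj_r_transport => //; [exact: e0_comm | lia].
- case: ifP => [/andP[/eqP -> /eqP ->]|not_adj].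
    by rewrite /= prednK // subnn /= (rel_re H) ?(rel_er H).
  by rewrite (conj_r_e_diff (c := c)) ?not_adj //; apply/andP; lia.
- case: ifP => [/andP[/eqP -> /eqP ->]|not_adj].
    have [b' eb] : exists b', c = b'.+1 by exists c.-1; lia.
    by subst c; apply: conj_r_e_sum_adjacent.
  rewrite conj_rM3 // !conj_r_transport //; try exact: r0_comm; try lia.
  by have := conj_r_e_diff (c := c) (a := a) (b := b); rewrite /= => ->; rewrite ?not_adj //; lia.
Qed.

Lemma conj_r_e_root c x : (c < n)%N -> croot_in n x ->
  r c * e_root x * r c = e_root (croot_refl c x).
Proof.
case: (posnP c) => [->|c_gt0] hc; first exact: conj_r0_e_root.
by apply: conj_rpos_e_root; rewrite c_gt0.
Qed.

Lemma conj_rword_e_root w x : all (fun a => a < n)%N w -> croot_in n x ->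
  rword r w * e_root x * rword r (rev w) = e_root (foldr croot_refl x w).
Proof.
elim: w => [|c w IH] /=; first by rewrite /rword !big_nil mul1r mulr1.
move=> /andP[hc hw] hx; rewrite -conj_r_e_root ?croot_in_refl_word // -IH //.
by rewrite /rword big_cons rev_cons -cats1 big_cat big_seq1 /= !mulrA.
Qed.

End ConjugationByGenerators.

Lemma e_root_simple (A : pzRingType) (r e : nat -> A) j : e_root r e (simple_croot j) = e j.
Proof.
rewrite /simple_croot; case: eqP => [->|/eqP j0] /=; first by rewrite /transport /= mul1r mulr1.
by have -> : (j - j.-1.+1 = 0)%N by lia.
Qed.

Definition croot_vec (x : croot) (m : nat) : rat :=
  match x with
  | Long k => 2 * (m == k)%:R
  | Diff a b => (m == b)%:R - (m == a)%:R
  | Sum a b => (m == a)%:R + (m == b)%:R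
  end.

Definition rowf n (f : nat -> rat) : 'rV[rat]_n := \row_(m < n) f m.

Lemma dotv_rowf n f g : dotv (rowf n f) (rowf n g) = \sum_(k < n) f k * g k.
Proof. by apply: eq_bigr => k _; rewrite !mxE. Qed.

Lemma sum_mul_delta (R : pzSemiRingType) n (f : nat -> R) p : (p < n)%N ->
  \sum_(k < n) f k * ((k : nat) == p)%:R = f p.
Proof.
move=> hp; rewrite (bigD1 (Ordinal hp)) //= eqxx mulr1 big1 ?addr0 // => k hk.
by rewrite -val_eqE /= in hk; rewrite (negbTE hk) mulr0.
Qed.

Lemma beta0_rowf n : beta n 0 = rowf n (fun m => 2 * (m == 0%N)%:R).
Proof. by apply/rowP => m; rewrite !mxE /=; case: eqP; rewrite ?mulr1 ?mulr0. Qed.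

Lemma beta_rowf n c : (0 < c)%N ->
  beta n c = rowf n (fun m => (m == c)%:R - (m == c.-1)%:R).
Proof. by move=> c_gt0; apply/rowP => m; rewrite !mxE ifN_eq // -lt0n. Qed.

Lemma refl_beta0 n f : (0 < n)%N ->
  refl (beta n 0) (rowf n f) = rowf n (fun m => if m == 0%N then - f m else f m).
Proof.
move=> n_gt0; rewrite /refl beta0_rowf !dotv_rowf.
have -> : \sum_(k < n) f k * (2 * ((k : nat) == 0%N)%:R) = 2 * f 0%N.
  rewrite -(sum_mul_delta (fun k => 2 * f k) n_gt0).
  by apply: eq_bigr => k _; ring.
have -> : \sum_(k < n) 2 * ((k : nat) == 0%N)%:R * (2 * ((k : nat) == 0%N)%:R) = 4 :> rat.
  rewrite -(sum_mul_delta (fun => 4 : rat) n_gt0).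
  by apply: eq_bigr => k _; case: eqP => _ /=; ring.
by apply/rowP => m; rewrite !mxE; case: eqP => [->|_] /=; field.
Qed.

Lemma refl_beta n f c : (0 < c < n)%N ->
  refl (beta n c) (rowf n f) = rowf n (fun m => f (transp_pred c m)).
Proof.
move=> /andP[c_gt0 hc]; have hc' : (c.-1 < n)%N by lia.
rewrite /refl beta_rowf // !dotv_rowf.
have -> : \sum_(k < n) f k * (((k : nat) == c)%:R - ((k : nat) == c.-1)%:R) = f c - f c.-1.
  rewrite -(sum_mul_delta f hc) -(sum_mul_delta f hc') -sumrB.
  by apply: eq_bigr => k _; ring.
have -> : \sum_(k < n) (((k : nat) == c)%:R - ((k : nat) == c.-1)%:R) *
    (((k : nat) == c)%:R - ((k : nat) == c.-1)%:R) = 2 :> rat.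
  transitivity (\sum_(k < n) (1 * ((k : nat) == c)%:R + 1 * ((k : nat) == c.-1)%:R) : rat).
    by apply: eq_bigr => k _; case: ((k : nat) =P c); case: ((k : nat) =P c.-1) => ? ? /=;
      try lia; ring.
  by rewrite big_split /= (sum_mul_delta (fun => 1 : rat) hc) (sum_mul_delta (fun => 1 : rat) hc').
apply/rowP => m; rewrite !mxE /transp_pred.
by case: eqP => h1; case: eqP => h2 /=; try lia; rewrite ?h1 ?h2; field.
Qed.

Ltac case_coords := repeat (case: eqP => /eqP ? /=); intros.

Lemma refl_croot_vec n c x : (c < n)%N -> croot_in n x ->
  exists2 s : rat, s = 1 \/ s = -1 &
    rowf n (croot_vec (croot_refl c x)) = s *: refl (beta n c) (rowf n (croot_vec x)).
Proof.
move=> hc hx; case: (posnP c) => [c0|c_gt0].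
  subst c; rewrite refl_beta0 // /croot_refl eqxx.
  exists (if x is Long k then if k == 0%N then -1 else 1 else 1).
    by case: x {hx} => [k|a b|a b]; [case: eqP; [right|left] | left..].
  apply/rowP => m; rewrite !mxE; case: x hx => [k|a b|a b] /= hx;
    by case_coords; first [lra | exfalso; lia].
rewrite refl_beta ?c_gt0 // /croot_refl ifN_eq -?lt0n //.
exists (if x is Diff a b then if (a == c.-1) && (b == c) then -1 else 1 else 1).
  by case: x {hx} => [k|a b|a b]; [left | case: ifP; [right|left] | left].
apply/rowP => m; rewrite !mxE; case: x hx => [k|a b|a b] /= hx.
- by rewrite eq_transp_pred mul1r.
- case: ifP => [/andP[/eqP -> /eqP ->]|_] /=; rewrite !eq_transp_pred ?mul1r //.
  by rewrite transp_pred_self transp_pred_pred; ring.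
- case: ifP => [/andP[/eqP -> /eqP ->]|_] /=; rewrite !eq_transp_pred mul1r //.
  by rewrite transp_pred_self transp_pred_pred addrC.
Qed.

Lemma reflZ n (b x : 'rV[rat]_n) s : refl b (s *: x) = s *: refl b x.
Proof.
have dotvZ : dotv (s *: x) b = s * dotv x b.
  by rewrite /dotv mulr_sumr; apply: eq_bigr => k _; rewrite !mxE mulrA.
by rewrite /refl dotvZ scalerBr scalerA; congr (_ - _ *: _); rewrite !mulrA (mulrC s).
Qed.

Lemma wact_croot_vec n w x : all (fun a => a < n)%N w -> croot_in n x ->
  exists2 s : rat, s = 1 \/ s = -1 &
    rowf n (croot_vec (foldr croot_refl x w)) = s *: wact w (rowf n (croot_vec x)).
Proof.
elim: w => [|c w IH] /=; first by exists 1; [left | rewrite scale1r].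
move=> /andP[hc hw] hx; have [s s_sign ws] := IH hw hx.
have [s' s'_sign ->] := refl_croot_vec hc (croot_in_refl_word hw hx).
rewrite ws reflZ scalerA; exists (s' * s) => //.
by case: s_sign => ->; case: s'_sign => ->; rewrite ?mulr1 ?mulrN1 ?opprK; [left|right|right|left].
Qed.

Lemma beta_simple n j : beta n j = rowf n (croot_vec (simple_croot j)).
Proof.
rewrite /simple_croot; case: (posnP j) => [->|j_gt0]; first exact: beta0_rowf.
by rewrite beta_rowf // ifN_eq -?lt0n.
Qed.

Lemma croot_vec_simple_inj n x j s : (j < n)%N -> croot_in n x -> s = 1 \/ s = -1 ->
  rowf n (croot_vec x) = s *: rowf n (croot_vec (simple_croot j)) -> x = simple_croot j.
Proof.
move=> hj hx s_sign E.
have coord m : (m < n)%N -> croot_vec x m = s * croot_vec (simple_croot j) m.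
  by move=> hm; move/rowP/(_ (Ordinal hm)): E; rewrite !mxE.
case: x hx coord {E} => [k|a b|a b] /= hx coord.
1: move: (coord k hx).
2,3: have /andP[ab bn] := hx; move: (coord a (ltn_trans ab bn)) (coord b bn);
  rewrite /= (ltn_eqF ab) (gtn_eqF ab).
all: rewrite /= eqxx /simple_croot; case: (posnP j) => [j0|j_gt0] /=; case_coords;
  first [f_equal; lia | exfalso; lia | exfalso; lra | exfalso; case: s_sign => ->; lra].
Qed.

Theorem mainTheorem10 (n : nat) (hn : (2 <= n)%N) (i j : nat)
  (hi : (i < n)%N) (hj : (j < n)%N) (w : seq nat) (hw : all (fun a => a < n)%N w)
  (hbeta : wact w (beta n i) = beta n j)
  (A : pzRingType) (d : A) (r e : nat -> A) (H : BrC_rels n d r e) :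
  rword r w * e i * rword r (rev w) = e j.
Proof.
have simple_i := croot_in_simple hi.
have [s s_sign wi] := wact_croot_vec hw simple_i.
rewrite -beta_simple hbeta beta_simple in wi.
have wij := croot_vec_simple_inj hj (croot_in_refl_word hw simple_i) s_sign wi.
by rewrite -(e_root_simple r e i) (conj_rword_e_root H hn) // wij e_root_simple.
Qed.
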